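(* For every set $X\subseteq\omega$ there exists an infinite $X$-computable tournament $T$ on $\omega$ such that every infinite $T$-transitive subtournament $U$ satisfies $U\subseteq^{*}X$ or $U\subseteq^{*}\overline{X}$.
   Context: A tournament $T$ on a domain $D\subseteq\mathbb N$ is an irreflexive binary relation on $D$ such that for all distinct $x,y\in D$ exactly one of $T(x,y)$, $T(y,x)$ holds. A set $U\subseteq D$ is $T$-transitive (a transitive subtournament) if $T$ restricted to $U$ is transitive. $A\subseteq^* B$ means all but finitely many elements of $A$ lie in $B$. *)

From Stdlib Require Import Arith List.
Import ListNotations.

(* Codes of partial recursive functions with one oracle (untyped arities). *)
Inductive code : Type :=
| Zero : code
| Succ : code
| Proj : nat -> code
| Comp : code -> list code -> code
| Prec : code -> code -> code
| Mu   : code -> code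
| Orac : code.

Inductive eval (X : nat -> Prop) : code -> list nat -> nat -> Prop :=
| eZero v : eval X Zero v 0
| eSucc x v : eval X Succ (x :: v) (S x)
| eProj i v : i < length v -> eval X (Proj i) v (nth i v 0)
| eComp f gs v ws y : evals X gs v ws -> eval X f ws y -> eval X (Comp f gs) v y
| ePrec0 f g v y : eval X f v y -> eval X (Prec f g) (0 :: v) y
| ePrecS f g n v r y :
    eval X (Prec f g) (n :: v) r -> eval X g (n :: r :: v) y ->
    eval X (Prec f g) (S n :: v) y
| eMu f v n :
    eval X f (n :: v) 0 ->
    (forall m, m < n -> exists k, eval X f (m :: v) (S k)) ->
    eval X (Mu f) v n
| eOrac1 x v : X x -> eval X Orac (x :: v) 1
| eOrac0 x v : ~ X x -> eval X Orac (x :: v) 0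
with evals (X : nat -> Prop) : list code -> list nat -> list nat -> Prop :=
| esNil v : evals X nil v nil
| esCons g gs v y ys : eval X g v y -> evals X gs v ys -> evals X (g :: gs) v (y :: ys).

Definition X_computable_rel (X : nat -> Prop) (R : nat -> nat -> Prop) : Prop :=
  exists c : code, forall x y : nat,
    (R x y -> eval X c [x; y] 1) /\ (~ R x y -> eval X c [x; y] 0).

Definition tournament (T : nat -> nat -> Prop) : Prop :=
  (forall x, ~ T x x) /\
  (forall x y, x <> y -> (T x y \/ T y x) /\ ~ (T x y /\ T y x)).

Definition T_transitive (T : nat -> nat -> Prop) (U : nat -> Prop) : Prop :=
  forall x y z, U x -> U y -> U z -> T x y -> T y z -> T x z.

Definition infinite_set (U : nat -> Prop) : Prop :=
  forall n, exists m, n <= m /\ U m.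

Definition almost_subset (A B : nat -> Prop) : Prop :=
  exists N, forall x, N <= x -> A x -> B x.

(* Colour ω by X and let x → y when x < y and x, y have the same colour, or
   x > y and they have different colours.  Deciding x → y needs only the two
   oracle bits, so the tournament is X-computable.  If a transitive U met both
   colours infinitely often, it would contain a < b < c with a, c ∈ X and
   b ∉ X; then c → b and b → a, but a → c. *)
From Stdlib Require Import Arith List Lia Classical ClassicalEpsilon.
Import ListNotations.

Definition bit (P : Prop) : nat := if excluded_middle_informative P then 1 else 0.

Lemma bit_true (P : Prop) : P -> bit P = 1.
Proof. unfold bit; destruct excluded_middle_informative; tauto. Qed.

Lemma bit_false (P : Prop) : ~ P -> bit P = 0.
Proof. unfold bit; destruct excluded_middle_informative; tauto. Qed.

Lemma bit_iff (P Q : Prop) : (P <-> Q) -> bit P = bit Q.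
Proof.
  intros HPQ. destruct (classic P).
  - rewrite !bit_true; tauto.
  - rewrite !bit_false; tauto.
Qed.

Definition sg (n : nat) : nat := match n with 0 => 0 | S _ => 1 end.

Definition cond (c u w : nat) : nat := match c with 0 => w | S _ => u end.

Lemma sg_sub (x y : nat) : sg (y - x) = bit (x < y).
Proof.
  destruct (lt_dec x y) as [Hxy | Hxy].
  - rewrite bit_true by exact Hxy. replace (y - x) with (S (y - x - 1)) by lia. reflexivity.
  - rewrite bit_false by exact Hxy. replace (y - x) with 0 by lia. reflexivity.
Qed.

Lemma cond_bit_iff (P Q : Prop) : cond (bit P) (bit Q) (1 - bit Q) = bit (P <-> Q).
Proof.
  destruct (classic P), (classic Q);
    repeat first [ rewrite bit_true by tauto | rewrite bit_false by tauto ]; reflexivity.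
Qed.

Lemma one_sub_bit (P : Prop) : 1 - bit P = bit (~ P).
Proof.
  destruct (classic P);
    repeat first [ rewrite bit_true by tauto | rewrite bit_false by tauto ]; reflexivity.
Qed.

Section OracleArithmetic.

Variable X : nat -> Prop.

Definition code_one : code := Comp Succ [Zero].
Definition code_pred : code := Prec Zero (Proj 0).
Definition code_monus : code := Prec (Proj 0) (Comp code_pred [Proj 1]).
Definition code_sg : code := Prec Zero code_one.
Definition code_cond : code := Prec (Proj 1) (Proj 2).

Lemma eval_fst (x : nat) (v : list nat) : eval X (Proj 0) (x :: v) x.
Proof. exact (eProj X 0 (x :: v) ltac:(simpl; lia)). Qed.

Lemma eval_snd (x y : nat) (v : list nat) : eval X (Proj 1) (x :: y :: v) y.
Proof. exact (eProj X 1 (x :: y :: v) ltac:(simpl; lia)). Qed.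

Lemma eval_one (v : list nat) : eval X code_one v 1.
Proof. eapply eComp; repeat constructor. Qed.

Lemma eval_pred (n : nat) : eval X code_pred [n] (n - 1).
Proof.
  induction n as [| n IHn].
  - repeat constructor.
  - eapply ePrecS; [exact IHn |].
    replace (S n - 1) with n by lia. apply eval_fst.
Qed.

Lemma eval_monus (a b : nat) : eval X code_monus [a; b] (b - a).
Proof.
  induction a as [| a IHa].
  - constructor. rewrite Nat.sub_0_r. apply eval_fst.
  - eapply ePrecS; [exact IHa |].
    replace (b - S a) with (b - a - 1) by lia.
    eapply eComp; [apply esCons; [apply eval_snd | apply esNil] | apply eval_pred].
Qed.

Lemma eval_sg (n : nat) : eval X code_sg [n] (sg n).
Proof.
  induction n as [| n IHn].
  - repeat constructor.
  - eapply ePrecS; [exact IHn | apply eval_one].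
Qed.

Lemma eval_cond (c u w : nat) : eval X code_cond [c; u; w] (cond c u w).
Proof.
  induction c as [| c IHc].
  - constructor. apply eval_snd.
  - eapply ePrecS; [exact IHc |].
    exact (eProj X 2 [c; cond c u w; u; w] ltac:(simpl; lia)).
Qed.

Lemma eval_oracle (x : nat) : eval X Orac [x] (bit (X x)).
Proof.
  destruct (classic (X x)).
  - rewrite bit_true by assumption. now constructor.
  - rewrite bit_false by assumption. now constructor.
Qed.

Lemma X_computable_rel_of_eval (R : nat -> nat -> Prop) (c : code) :
  (forall x y, eval X c [x; y] (bit (R x y))) -> X_computable_rel X R.
Proof.
  intros Hc. exists c. intros x y. split; intros HR.
  - rewrite <- (bit_true _ HR). apply Hc.
  - rewrite <- (bit_false _ HR). apply Hc.
Qed.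

End OracleArithmetic.

Definition colour_tournament (X : nat -> Prop) (x y : nat) : Prop :=
  x <> y /\ (x < y <-> (X x <-> X y)).

Lemma colour_tournament_tournament (X : nat -> Prop) : tournament (colour_tournament X).
Proof.
  unfold colour_tournament. split.
  - intros x [Hxx _]. now apply Hxx.
  - intros x y Hxy. split.
    + destruct (classic (X x <-> X y)), (lt_dec x y);
        [left | right | right | left]; (split; [lia | intuition lia]).
    + intros [[_ Hxy'] [_ Hyx]]. destruct (lt_dec x y).
      * assert (y < x) by tauto. lia.
      * assert (y < x) by lia. assert (x < y) by tauto. lia.
Qed.

Definition colour_tournament_code : code :=
  let same := Comp code_cond [Comp Orac [Proj 0]; Comp Orac [Proj 1];
                              Comp code_monus [Comp Orac [Proj 1]; code_one]] in
  Comp code_cond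
    [Comp code_sg [Comp code_monus [Proj 0; Proj 1]]; same;
     Comp code_cond [Comp code_sg [Comp code_monus [Proj 1; Proj 0]];
                     Comp code_monus [same; code_one]; Zero]].

Definition colour_tournament_char (X : nat -> Prop) (x y : nat) : nat :=
  let same := cond (bit (X x)) (bit (X y)) (1 - bit (X y)) in
  cond (sg (y - x)) same (cond (sg (x - y)) (1 - same) 0).

Lemma eval_colour_tournament_code (X : nat -> Prop) (x y : nat) :
  eval X colour_tournament_code [x; y] (colour_tournament_char X x y).
Proof.
  unfold colour_tournament_code, colour_tournament_char; cbv zeta.
  repeat first
    [ apply esNil | apply esCons
    | apply eval_cond | apply eval_monus | apply eval_sg | apply eval_oracle
    | apply eval_one | apply eval_fst | apply eval_snd | apply eZero
    | eapply eComp ].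
Qed.

Lemma colour_tournament_char_bit (X : nat -> Prop) (x y : nat) :
  colour_tournament_char X x y = bit (colour_tournament X x y).
Proof.
  unfold colour_tournament_char, colour_tournament; cbv zeta.
  rewrite cond_bit_iff, one_sub_bit, !sg_sub.
  destruct (lt_eq_lt_dec x y) as [[Hxy | <-] | Hyx].
  - rewrite (bit_true (x < y)), (bit_false (y < x)) by lia. cbn [cond].
    apply bit_iff. intuition lia.
  - rewrite (bit_false (x < x)) by lia. cbn [cond].
    symmetry. apply bit_false. intros [Hxx _]. now apply Hxx.
  - rewrite (bit_false (x < y)), (bit_true (y < x)) by lia. cbn [cond].
    apply bit_iff. intuition lia.
Qed.

Lemma colour_tournament_computable (X : nat -> Prop) :
  X_computable_rel X (colour_tournament X).
Proof.
  apply (X_computable_rel_of_eval X _ colour_tournament_code).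
  intros x y. rewrite <- colour_tournament_char_bit.
  apply eval_colour_tournament_code.
Qed.

Lemma colour_tournament_not_transitive (X U : nat -> Prop) (a b c : nat) :
  a < b -> b < c -> X a -> ~ X b -> X c -> U a -> U b -> U c ->
  ~ T_transitive (colour_tournament X) U.
Proof.
  intros Hab Hbc Xa Xb Xc Ua Ub Uc HU.
  assert (Hcb : colour_tournament X c b) by (split; [lia | intuition lia]).
  assert (Hba : colour_tournament X b a) by (split; [lia | intuition lia]).
  destruct (HU c b a Uc Ub Ua Hcb Hba) as [_ Hca].
  apply (Nat.lt_irrefl a). transitivity c; [lia |].
  apply Hca. tauto.
Qed.

Lemma not_almost_subset_unbounded (U P : nat -> Prop) :
  ~ almost_subset U P -> forall N, exists x, N <= x /\ U x /\ ~ P x.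
Proof.
  intros HUP N. apply NNPP. intros Hnone. apply HUP. exists N.
  intros x HNx Ux. apply NNPP. intros Px. apply Hnone. eauto.
Qed.

Theorem mainTheorem10 :
  forall X : nat -> Prop,
    exists T : nat -> nat -> Prop,
      tournament T /\ X_computable_rel X T /\
      (forall U : nat -> Prop,
         infinite_set U -> T_transitive T U ->
         almost_subset U X \/ almost_subset U (fun x => ~ X x)).
Proof.
  intros X. exists (colour_tournament X).
  split; [apply colour_tournament_tournament |].
  split; [apply colour_tournament_computable |].
  intros U _ HU. apply NNPP. intros Hboth. apply not_or_and in Hboth as [HnX HX].
  destruct (not_almost_subset_unbounded _ _ HX 0) as (a & _ & Ua & Xa).
  destruct (not_almost_subset_unbounded _ _ HnX (S a)) as (b & Hab & Ub & Xb).
  destruct (not_almost_subset_unbounded _ _ HX (S b)) as (c & Hbc & Uc & Xc).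
  apply NNPP in Xa, Xc.
  exact (colour_tournament_not_transitive X U a b c Hab Hbc Xa Xb Xc Ua Ub Uc HU).
Qed.
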